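(* Let $C$ be a Reedy category. If $([m],X)$ and $([n],Y)$ are objects of $\int N^{--,+}_+(C)$ and $(\alpha,\theta)\colon([m],X)\to([n],Y)$ is a morphism of $\int N^{-,+}(C)$, then $\alpha\colon[m]\to[n]$ is injective. Consequently $\int N^{--,+}_+(C)$ is a full subcategory of $\int N^{-,+}(C)$.
   Context: A Reedy category $(C,C_-,C_+)$: wide subcategories with unique factorization of every morphism as ($C_-$ then $C_+$), every morphism of $C_\pm$ decidably identity or not, and the relation ($x<'y$ iff non-identity $x\to y$ in $C_+$ or non-identity $y\to x$ in $C_-$) well-founded. $\Delta$: finite ordinals $[n]=\{0<\dots<n\}$ and order-preserving maps. $\int N^{-,+}(C)$: objects $([n],X)$ with $X\colon[n]\to C$ a functor sending all morphisms into $C_-$; morphisms $([m],X)\to([n],Y)$ are $(\alpha,\theta)$ with $\alpha\colon[m]\to[n]$ in $\Delta$ and $\theta\colon X\Rightarrow Y\circ\alpha$ with all components in $C_+$; composition $(\beta,\varphi)\circ(\alpha,\theta)=(\beta\alpha,(\varphi\alpha)\circ\theta)$. $\int N^{--,+}_+(C)$: the subcategory of objects $([n],X)$ with $X$ reflecting identities ($X(i\le j)$ an identity implies $i=j$) and morphisms $(\alpha,\theta)$ with $\alpha$ injective. *)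

From mathcomp Require Import all_boot.
Set Implicit Arguments. Unset Strict Implicit. Unset Printing Implicit Defensive.

Record Cat := {
  Obj :> Type;
  Hom : Obj -> Obj -> Type;
  idm : forall x, Hom x x;
  comp : forall x y z, Hom y z -> Hom x y -> Hom x z;
  comp_idl : forall x y (f : Hom x y), comp (idm y) f = f;
  comp_idr : forall x y (f : Hom x y), comp f (idm x) = f;
  comp_assoc : forall x y z w (f : Hom x y) (g : Hom y z) (h : Hom z w),
      comp h (comp g f) = comp (comp h g) f
}.
Arguments idm {c} x.
Arguments comp {c x y z} _ _.

Definition is_id (C : Cat) (x y : C) (f : Hom x y) : Prop :=
  exists e : y = x, eq_rect y (fun z => Hom x z) f x e = idm x.

Record Reedy := {
  RC :> Cat;
  Cminus : forall x y : RC, Hom x y -> Prop;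
  Cplus : forall x y : RC, Hom x y -> Prop;
  minus_id : forall x, Cminus (idm x);
  minus_comp : forall x y z (g : Hom y z) (f : Hom x y),
      Cminus f -> Cminus g -> Cminus (comp g f);
  plus_id : forall x, Cplus (idm x);
  plus_comp : forall x y z (g : Hom y z) (f : Hom x y),
      Cplus f -> Cplus g -> Cplus (comp g f);
  fact_exists : forall x y (f : Hom x y),
      exists z (m : Hom x z) (p : Hom z y), [/\ Cminus m, Cplus p & comp p m = f];
  fact_unique : forall x y z z' (m : Hom x z) (p : Hom z y)
      (m' : Hom x z') (p' : Hom z' y),
      Cminus m -> Cplus p -> Cminus m' -> Cplus p' -> comp p m = comp p' m' ->
      existT (fun w => (Hom x w * Hom w y)%type) z (m, p)
      = existT (fun w => (Hom x w * Hom w y)%type) z' (m', p');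
  minus_dec : forall x y (f : Hom x y), Cminus f -> {is_id f} + {~ is_id f};
  plus_dec : forall x y (f : Hom x y), Cplus f -> {is_id f} + {~ is_id f};
  reedy_wf : well_founded (fun x y : RC =>
      (exists f : Hom x y, Cplus f /\ ~ is_id f) \/
      (exists f : Hom y x, Cminus f /\ ~ is_id f))
}.

(** Objects of  \int N^{-,+}(C) : ([n], X) with X : [n] -> C a functor
    sending every morphism into C_- ; [n] = 'I_n.+1 ordered by <=. *)
Record NObj (C : Reedy) := {
  nlen : nat;
  nob : 'I_nlen.+1 -> RC C;
  nmap : forall i j : 'I_nlen.+1, i <= j -> Hom (nob i) (nob j);
  nmap_id : forall (i : 'I_nlen.+1) (h : i <= i), nmap h = idm (nob i);
  nmap_comp : forall i j k : 'I_nlen.+1, forall (hij : i <= j) (hjk : j <= k) (hik : i <= k),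
      nmap hik = comp (nmap hjk) (nmap hij);
  nmap_minus : forall (i j : 'I_nlen.+1) (h : i <= j), Cminus (nmap h)
}.

Arguments nob {C} n i : rename.
Arguments nmap {C} n {i j} h : rename.

(** Morphisms (alpha, theta) : ([m],X) -> ([n],Y) of \int N^{-,+}(C):
    alpha : [m] -> [n] in Delta, theta : X => Y o alpha natural with
    components in C_+. *)
Record NMor (C : Reedy) (A B : NObj C) := {
  nalpha : 'I_(nlen A).+1 -> 'I_(nlen B).+1;
  nalpha_mono : forall i j : 'I_(nlen A).+1, i <= j -> nalpha i <= nalpha j;
  ntheta : forall i : 'I_(nlen A).+1, Hom (nob A i) (nob B (nalpha i));
  ntheta_plus : forall i : 'I_(nlen A).+1, Cplus (ntheta i);
  ntheta_nat : forall (i j : 'I_(nlen A).+1) (h : i <= j),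
      comp (nmap B (nalpha_mono h)) (ntheta i) = comp (ntheta j) (nmap A h)
}.

(** Objects of \int N^{--,+}_+(C): X reflects identities. *)
Definition reflects_ids (C : Reedy) (A : NObj C) : Prop :=
  forall i j : 'I_(nlen A).+1, forall (h : i <= j), is_id (nmap A h) -> i = j.

(** Morphisms of \int N^{--,+}_+(C): alpha injective. *)
Definition sub_mor (C : Reedy) (A B : NObj C) (f : NMor A B) : Prop :=
  injective (nalpha f).

From Pilot Require Import Defs.
From mathcomp Require Import all_boot.
Set Implicit Arguments. Unset Strict Implicit.

(* If alpha i = alpha j for i <= j, naturality gives theta_i = theta_j o X(i <= j).
   Together with theta_i = theta_i o id these are two (C_-, C_+)-factorizations of
   theta_i, so X(i <= j) is an identity by uniqueness, and i = j because X reflects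
   identities. Only the domain needs to reflect identities. *)

Lemma minus_is_id_of_comp_plus (C : Reedy) (x y z : C) (m : Hom x y) (p : Hom y z) :
  Cminus m -> Cplus p -> Cplus (Defs.comp p m) -> is_id m.
Proof.
move=> Hm Hp Hpm.
have := fact_unique (minus_id x) Hpm Hm Hp.
rewrite comp_idr => /(_ erefl) E.
have [e] : exists e : x = y,
    eq_rect x (fun w => (Hom x w * Hom w z)%type) (idm x, Defs.comp p m) y e = (m, p).
  exact: ex_intro _ _ (projT2_eq E).
by case: y / e m p {Hm Hp Hpm E} => m p /= [<- _]; exists erefl.
Qed.

Lemma nmap_plus_of_eq (C : Reedy) (A : NObj C) (i j : 'I_(nlen A).+1) (h : i <= j) :
  i = j -> Cplus (nmap A h).
Proof. by move=> eij; subst j; rewrite nmap_id; apply: plus_id. Qed.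

Lemma ntheta_comp_plus (C : Reedy) (A B : NObj C) (f : NMor A B)
    (i j : 'I_(nlen A).+1) (h : i <= j) :
  nalpha f i = nalpha f j -> Cplus (Defs.comp (ntheta f j) (nmap A h)).
Proof.
move=> Eij; rewrite -ntheta_nat.
exact: plus_comp (ntheta_plus f i) (nmap_plus_of_eq _ Eij).
Qed.

Lemma nmap_is_id_of_nalpha_eq (C : Reedy) (A B : NObj C) (f : NMor A B)
    (i j : 'I_(nlen A).+1) (h : i <= j) :
  nalpha f i = nalpha f j -> is_id (nmap A h).
Proof.
move=> Eij.
exact: minus_is_id_of_comp_plus (nmap_minus h) (ntheta_plus f j)
  (ntheta_comp_plus h Eij).
Qed.

Theorem lemma3p5 (C : Reedy) (A B : NObj C) (f : NMor A B) :
  reflects_ids A -> reflects_ids B -> injective (nalpha f).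
Proof.
move=> reflA _ i j.
wlog h : i j / i <= j => [wlog_ij Eij|].
  by case/orP: (leq_total i j) => h; [|apply: esym]; apply: wlog_ij h _.
by move=> Eij; apply: reflA h (nmap_is_id_of_nalpha_eq h Eij).
Qed.
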